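(* Let $\gamma>0$, $\beta:\mathcal S\to(0,+\infty)$ of class $\mathcal C^1$, $\bar y\in(0,1]$ and $(x_0,y_0)\in\mathcal S$ with $0<y_0\le\bar y$. Let $u\in\mathcal U^{\bar y}_{x_0,y_0}$ satisfy $J(u)=\int_0^\infty u(t)\,dt<+\infty$, and let $(x(t),y(t))$ be the corresponding solution of the controlled CBF-SIR model with initial condition $(x_0,y_0)$. Then there exists a finite time $\bar t$ such that $R(x(\bar t),y(\bar t))<1$.
   Context: $\mathcal S=\{(x,y)\in\mathbb R^2_+: x+y\le1\}$; $R(x,y)=\frac1\gamma\beta(x,y)x$. $\mathcal U$ is the set of functions $u:[0,\infty)\to[0,1]$ continuous except on a set of points without accumulation points, at each of which $u$ has finite one-sided limits and equals its right limit. Controlled CBF-SIR model: $\dot x=-(1-u(t))\gamma R(x,y)y$, $\dot y=\gamma((1-u(t))R(x,y)-1)y$, with continuous piecewise-$\mathcal C^1$ solutions in $\mathcal S$ solving the ODE outside jump times of $u$. $\mathcal U^{\bar y}_{x_0,y_0}$ is the set of $u\in\mathcal U$ whose solution from $(x_0,y_0)$ satisfies $y(t)\le\bar y$ for all $t\ge0$. *)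

From Stdlib Require Import Reals Lra List.
From Coquelicot Require Import Coquelicot.
Open Scope R_scope.

Definition inS (x y : R) : Prop := 0 <= x /\ 0 <= y /\ x + y <= 1.

Definition Rrep (gamma : R) (beta : R -> R -> R) (x y : R) : R :=
  beta x y * x / gamma.

Definition open2 (U : R -> R -> Prop) : Prop :=
  forall x y, U x y -> exists eps, 0 < eps /\
    forall x' y', (x' - x)^2 + (y' - y)^2 < eps^2 -> U x' y'.

Definition C1_on_S (beta : R -> R -> R) : Prop :=
  exists U : R -> R -> Prop, open2 U /\ (forall x y, inS x y -> U x y) /\
    (forall x y, U x y ->
       ex_derive (fun t => beta t y) x /\ ex_derive (fun t => beta x t) y) /\
    (forall x y, U x y ->
       continuity_2d_pt (fun a b => Derive (fun t => beta t b) a) x y /\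
       continuity_2d_pt (fun a b => Derive (fun t => beta a t) b) x y).

(* a set of times in [0,oo) without accumulation points:
   only finitely many of its points in each [0,T] *)
Definition locally_finite (D : R -> Prop) : Prop :=
  forall T, exists l : list R, forall t, D t -> 0 <= t <= T -> In t l.

Definition admissible (u : R -> R) : Prop :=
  (forall t, 0 <= t -> 0 <= u t <= 1) /\
  exists D : R -> Prop, locally_finite D /\
    (forall t, 0 < t -> ~ D t -> continuous u t) /\
    (forall t, 0 <= t -> filterlim u (at_right t) (locally (u t))) /\
    (forall t, 0 < t -> exists l : R, filterlim u (at_left t) (locally l)).

Definition is_solution (gamma : R) (beta : R -> R -> R) (u : R -> R)
    (x0 y0 : R) (x y : R -> R) : Prop :=
  x 0 = x0 /\ y 0 = y0 /\
  (forall t, 0 < t -> continuous x t /\ continuous y t) /\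
  filterlim x (at_right 0) (locally (x 0)) /\
  filterlim y (at_right 0) (locally (y 0)) /\
  (forall t, 0 <= t -> inS (x t) (y t)) /\
  exists E : R -> Prop, locally_finite E /\
    forall t, 0 < t -> ~ E t ->
      is_derive x t (- (1 - u t) * gamma * Rrep gamma beta (x t) (y t) * y t) /\
      is_derive y t (gamma * ((1 - u t) * Rrep gamma beta (x t) (y t) - 1) * y t).

Definition admissible_ybar (gamma : R) (beta : R -> R -> R) (ybar x0 y0 : R)
    (u : R -> R) (x y : R -> R) : Prop :=
  admissible u /\ is_solution gamma beta u x0 y0 x y /\
  (forall t, 0 <= t -> y t <= ybar).

Definition J_finite (u : R -> R) : Prop :=
  ex_RInt_gen u (at_point 0) (Rbar_locally p_infty).

(* With
   I(t) = int_0^t u, the quantity y(t) e^{gamma I(t)} has derivative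
   gamma y e^{gamma I} (1 - u) (R - 1) >= 0, and I is bounded by J(u) < oo, so y
   stays above some c > 0.  Then x' <= - gamma c (1 - u), i.e.
   x(t) + gamma c (t - I(t)) is nonincreasing; as t - I(t) >= t - J(u) grows
   without bound, x eventually becomes negative, contradicting x >= 0. *)
From Stdlib Require Import Reals Lra List Classical.
From Coquelicot Require Import Coquelicot.
Open Scope R_scope.

Lemma nondecreasing_of_derive_nonneg (f df : R -> R) (a b : R) : a <= b ->
  (forall t, a <= t <= b -> continuity_pt f t) ->
  (forall t, a < t < b -> is_derive f t (df t) /\ 0 <= df t) -> f a <= f b.
Proof.
  intros Hab Hc Hd.
  destruct (Req_dec a b) as [<-|Hne]; [lra|].
  assert (Hder : forall c, a < c < b -> derivable_pt f c).
  { intros c Hc'; exists (df c); apply is_derive_Reals, (Hd c Hc'). }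
  destruct (MVT f id a b Hder (fun c _ => derivable_pt_id c) ltac:(lra) Hc
     (fun c _ => derivable_continuous_pt _ _ (derivable_pt_id c)))
    as [c [Hc_ab Hmvt]].
  rewrite derive_pt_id in Hmvt.
  replace (derive_pt f c (Hder c Hc_ab)) with (df c) in Hmvt
    by (symmetry; apply derive_pt_eq_0, is_derive_Reals, (Hd c Hc_ab)).
  unfold id in Hmvt. destruct (Hd c Hc_ab) as [_ Hdf]. nra.
Qed.

Lemma nondecreasing_of_derive_nonneg_off_list (f df : R -> R) (l : list R) :
  forall a b, a <= b ->
  (forall t, a <= t <= b -> continuity_pt f t) ->
  (forall t, a < t < b -> ~ In t l -> is_derive f t (df t) /\ 0 <= df t) ->
  f a <= f b.
Proof.
  induction l as [|p l IH]; intros a b Hab Hc Hd.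
  - apply (nondecreasing_of_derive_nonneg f df); auto.
  - destruct (classic (a < p < b)) as [Hp|Hp].
    + apply Rle_trans with (f p); apply IH; try lra;
        try (intros t Ht; apply Hc; lra);
        intros t Ht Hl; apply Hd; try lra;
        intros [->|Hin]; solve [lra | contradiction].
    + apply IH; auto.
      intros t Ht Hl; apply Hd; auto; intros [->|Hin]; [contradiction|auto].
Qed.

Lemma nondecreasing_off_locally_finite (f df : R -> R) (N : R -> Prop) (a b : R) :
  locally_finite N -> 0 <= a <= b ->
  (forall t, a <= t <= b -> continuous f t) ->
  (forall t, a < t < b -> ~ N t -> is_derive f t (df t) /\ 0 <= df t) ->
  f a <= f b.
Proof.
  intros HN Hab Hc Hd. destruct (HN b) as [l Hl].
  apply (nondecreasing_of_derive_nonneg_off_list f df l); try lra.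
  - intros t Ht; apply continuity_pt_filterlim, Hc, Ht.
  - intros t Ht Hnl; apply Hd; auto.
    intro HNt; apply Hnl, Hl; [exact HNt|lra].
Qed.

Lemma locally_finite_union (D E : R -> Prop) :
  locally_finite D -> locally_finite E -> locally_finite (fun t => D t \/ E t).
Proof.
  intros HD HE T. destruct (HD T) as [l1 H1], (HE T) as [l2 H2].
  exists (l1 ++ l2). intros t [Ht|Ht] HtT; apply in_or_app; auto.
Qed.

Lemma right_limit_pos (f : R -> R) (a : R) :
  filterlim f (at_right a) (locally (f a)) -> 0 < f a -> exists d, a < d /\ 0 < f d.
Proof.
  intros Hlim Hpos.
  destruct (proj1 (filterlim_locally _ _) Hlim (mkposreal _ Hpos)) as [e He].
  assert (He0 := cond_pos e).
  assert (Hball : ball a e (a + e / 2)).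
  { change (Rabs (a + e / 2 - a) < e). rewrite Rabs_right; lra. }
  exists (a + e / 2). split; [lra|].
  specialize (He _ Hball ltac:(lra)).
  change (Rabs (f (a + e / 2) - f a) < f a) in He.
  apply Rabs_def2 in He. lra.
Qed.

Lemma RInt_gen_nonneg_partial_bounded (u : R -> R) :
  (forall t, 0 <= t -> 0 <= u t) ->
  ex_RInt_gen u (at_point 0) (Rbar_locally p_infty) ->
  exists L, forall t, 0 <= t -> ex_RInt u 0 t /\ RInt u 0 t <= L.
Proof.
  intros Hu [l Hl].
  destruct (Hl (fun v => Rabs (v - l) < 1)) as [Q P HQ [M HM] HQP].
  { exists (mkposreal 1 Rlt_0_1). intros v Hv. exact Hv. }
  exists (l + 1). intros t Ht.
  set (s := Rmax M t + 1).
  assert (Hts : t <= s) by (generalize (Rmax_r M t); unfold s; lra).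
  destruct (HQP 0 s HQ (HM s ltac:(generalize (Rmax_l M t); unfold s; lra)))
    as [v [Hv Hvl]].
  apply Rabs_def2 in Hvl.
  assert (Hex0t : ex_RInt u 0 t)
    by (apply (ex_RInt_Chasles_1 u 0 t s); [lra | exists v; exact Hv]).
  assert (Hexts : ex_RInt u t s)
    by (apply (ex_RInt_Chasles_2 u 0 t s); [lra | exists v; exact Hv]).
  split; [exact Hex0t|].
  assert (Hsplit := RInt_Chasles u 0 t s Hex0t Hexts).
  rewrite (is_RInt_unique u 0 s v Hv) in Hsplit.
  assert (0 <= RInt u t s) by (apply RInt_ge_0; auto; intros z Hz; apply Hu; lra).
  change plus with Rplus in Hsplit. lra.
Qed.

Lemma locally_is_RInt_primitive (u : R -> R) (t : R) : 0 < t ->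
  (forall s, 0 <= s -> ex_RInt u 0 s) ->
  locally t (fun s => is_RInt u 0 s (RInt u 0 s)).
Proof.
  intros Ht Hex. exists (mkposreal t Ht). intros s Hs.
  apply (@RInt_correct R_CompleteNormedModule), Hex.
  change (Rabs (s - t) < t) in Hs. apply Rabs_def2 in Hs. lra.
Qed.

Lemma exp_le_compat (a b : R) : a <= b -> exp a <= exp b.
Proof. intros Hab; apply Rnot_lt_le; intro Hlt; apply exp_lt_inv in Hlt; lra. Qed.

Section PersistentOutbreak.

Variables (gamma : R) (beta : R -> R -> R) (u x y I : R -> R) (L : R)
  (N : R -> Prop).

Let Rt (t : R) : R := Rrep gamma beta (x t) (y t).

Hypothesis gamma_pos : 0 < gamma.
Hypothesis u_range : forall t, 0 <= t -> 0 <= u t <= 1.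
Hypothesis xy_in_S : forall t, 0 <= t -> inS (x t) (y t).
Hypothesis Rt_ge1 : forall t, 0 <= t -> 1 <= Rt t.
Hypothesis x_continuous : forall t, 0 < t -> continuous x t.
Hypothesis y_continuous : forall t, 0 < t -> continuous y t.
Hypothesis I_continuous : forall t, 0 < t -> continuous I t.
Hypothesis I_range : forall t, 0 <= t -> 0 <= I t <= L.
Hypothesis N_locally_finite : locally_finite N.
Hypothesis x_derive : forall t, 0 < t -> ~ N t ->
  is_derive x t (- (1 - u t) * gamma * Rt t * y t).
Hypothesis y_derive : forall t, 0 < t -> ~ N t ->
  is_derive y t (gamma * ((1 - u t) * Rt t - 1) * y t).
Hypothesis I_derive : forall t, 0 < t -> ~ N t -> is_derive I t (u t).

Lemma y_exp_I_nondecreasing (a b : R) : 0 < a <= b ->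
  y a * exp (gamma * I a) <= y b * exp (gamma * I b).
Proof.
  intros Hab.
  apply (nondecreasing_off_locally_finite (fun s => y s * exp (gamma * I s))
    (fun s => gamma * ((1 - u s) * Rt s - 1) * y s * exp (gamma * I s)
              + y s * (gamma * u s * exp (gamma * I s))) N); auto; try lra.
  - intros t Ht.
    apply (continuous_mult y (fun s => exp (gamma * I s))); [apply y_continuous; lra|].
    apply continuous_exp_comp, (continuous_mult (fun _ => gamma) I);
      [apply continuous_const | apply I_continuous; lra].
  - intros t Ht HNt. split.
    + apply (is_derive_mult y (fun s => exp (gamma * I s))).
      * apply y_derive; auto; lra.
      * apply (is_derive_comp exp (fun s => gamma * I s)); [apply is_derive_exp|].
        apply (is_derive_scal I), I_derive; auto; lra.
      * intros; apply Rmult_comm.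
    + assert (Hu := u_range t ltac:(lra)). assert (HR := Rt_ge1 t ltac:(lra)).
      assert (Hy : 0 <= y t) by apply (xy_in_S t ltac:(lra)).
      assert (He := exp_pos (gamma * I t)).
      replace (_ + _) with
        (gamma * exp (gamma * I t) * y t * ((1 - u t) * (Rt t - 1))) by ring.
      repeat apply Rmult_le_pos; lra.
Qed.

Lemma y_lower_bound (a t : R) : 0 < a <= t -> y a * exp (- (gamma * L)) <= y t.
Proof.
  intros Hat.
  assert (Hmono := y_exp_I_nondecreasing a t Hat).
  destruct (I_range a ltac:(lra)) as [HIa _], (I_range t ltac:(lra)) as [_ HIt].
  assert (Ha1 : 1 <= exp (gamma * I a))
    by (rewrite <- exp_0; apply exp_le_compat; apply Rmult_le_pos; lra).
  assert (HtL : exp (- (gamma * L)) <= exp (- (gamma * I t)))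
    by (apply exp_le_compat; apply Ropp_le_contravar, Rmult_le_compat_l; lra).
  assert (Hy : y t = y t * exp (gamma * I t) * exp (- (gamma * I t)))
    by (rewrite Rmult_assoc, <- exp_plus, Rplus_opp_r, exp_0; ring).
  assert (Hya : 0 <= y a) by apply (xy_in_S a ltac:(lra)).
  rewrite Hy. apply Rmult_le_compat; try lra.
  - left; apply exp_pos.
  - nra.
Qed.

Lemma x_drift_nonincreasing (c a b : R) : 0 < a <= b ->
  (forall t, a <= t -> c <= y t) ->
  x b + gamma * c * (b - I b) <= x a + gamma * c * (a - I a).
Proof.
  intros Hab Hyc.
  apply Ropp_le_cancel.
  apply (nondecreasing_off_locally_finite (fun s => - (x s + gamma * c * (s - I s)))
    (fun s => - (- (1 - u s) * gamma * Rt s * y s + gamma * c * (1 - u s))) N);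
    auto; try lra.
  - intros t Ht.
    apply (continuous_opp (fun s => x s + gamma * c * (s - I s))).
    apply (continuous_plus x (fun s => gamma * c * (s - I s)));
      [apply x_continuous; lra|].
    apply (continuous_mult (fun _ => gamma * c) (fun s => s - I s));
      [apply continuous_const|].
    apply (continuous_minus (fun s => s) I);
      [apply continuous_id | apply I_continuous; lra].
  - intros t Ht HNt. split.
    + apply (is_derive_opp (fun s => x s + gamma * c * (s - I s))).
      apply (is_derive_plus x (fun s => gamma * c * (s - I s)));
        [apply x_derive; auto; lra|].
      apply (is_derive_scal (fun s => s - I s)).
      apply (is_derive_minus (fun s => s) I); [apply (@is_derive_id R_AbsRing)|].
      apply I_derive; auto; lra.
    + (* R y >= y >= c because R >= 1 *)
      assert (Hu := u_range t ltac:(lra)). assert (HR := Rt_ge1 t ltac:(lra)).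
      assert (Hy := Hyc t ltac:(lra)).
      assert (Hy0 : 0 <= y t) by apply (xy_in_S t ltac:(lra)).
      replace (- _) with (gamma * (1 - u t) * (Rt t * y t - c)) by ring.
      apply Rmult_le_pos; [apply Rmult_le_pos|]; nra.
Qed.

Lemma persistent_outbreak_absurd (a : R) : 0 < a -> 0 < y a -> False.
Proof.
  intros Ha Hya.
  set (c := y a * exp (- (gamma * L))).
  assert (Hc : 0 < c) by (apply Rmult_lt_0_compat; [lra | apply exp_pos]).
  assert (Hgc : 0 < gamma * c) by nra.
  destruct (I_range a ltac:(lra)) as [HIa HaL].
  set (b := a + L + 2 / (gamma * c)).
  assert (Hab : a <= b) by (assert (0 < 2 / (gamma * c)) by (apply Rdiv_lt_0_compat; lra);
                             unfold b; lra).
  assert (Hdrift := x_drift_nonincreasing c a b ltac:(lra)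
                      (fun t Ht => y_lower_bound a t ltac:(lra))).
  destruct (xy_in_S b ltac:(lra)) as [Hxb _], (xy_in_S a ltac:(lra)) as [_ [_ Hxa]].
  destruct (I_range b ltac:(lra)) as [_ HIb].
  assert (gamma * c * (b - L) <= gamma * c * (b - I b)) by (apply Rmult_le_compat_l; lra).
  assert (gamma * c * (b - L) = gamma * c * a + 2) by (unfold b; field; lra).
  assert (gamma * c * (a - I a) <= gamma * c * a) by nra.
  lra.
Qed.

End PersistentOutbreak.

Theorem lemma7 (gamma : R) (beta : R -> R -> R) (ybar x0 y0 : R)
  (u x y : R -> R) :
  0 < gamma ->
  (forall a b, inS a b -> 0 < beta a b) ->
  C1_on_S beta ->
  0 < ybar <= 1 ->
  inS x0 y0 -> 0 < y0 <= ybar ->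
  admissible_ybar gamma beta ybar x0 y0 u x y ->
  J_finite u ->
  exists tbar, 0 <= tbar /\ Rrep gamma beta (x tbar) (y tbar) < 1.
Proof.
  intros Hg _ _ _ _ Hy0
    [[Hu [D [HD [Hu_cont _]]]] [[_ [Hy00 [Hxy_cont [_ [Hy_right [HS [E [HE Hode]]]]]]]] _]]
    HJ.
  apply NNPP; intro Hno.
  assert (HR : forall t, 0 <= t -> 1 <= Rrep gamma beta (x t) (y t))
    by (intros t Ht; apply Rnot_lt_le; intro; apply Hno; exists t; auto).
  destruct (RInt_gen_nonneg_partial_bounded u (fun t Ht => proj1 (Hu t Ht)) HJ)
    as [L HL].
  assert (Hex : forall t, 0 <= t -> ex_RInt u 0 t) by (intros; apply HL; auto).
  destruct (right_limit_pos y 0 Hy_right ltac:(lra)) as [a [Ha Hya]].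
  apply (persistent_outbreak_absurd gamma beta u x y (fun t => RInt u 0 t) L
           (fun t => D t \/ E t)) with a; auto.
  - intros t Ht; apply Hxy_cont, Ht.
  - intros t Ht; apply Hxy_cont, Ht.
  - intros t Ht; apply (continuous_RInt_1 u 0 t), locally_is_RInt_primitive; auto.
  - intros t Ht; split; [apply RInt_ge_0; auto; intros; apply Hu; lra | apply HL, Ht].
  - apply locally_finite_union; auto.
  - intros t Ht HN; apply Hode; auto.
  - intros t Ht HN; apply Hode; auto.
  - intros t Ht HN; apply (is_derive_RInt u _ 0).
    + apply locally_is_RInt_primitive; auto.
    + apply Hu_cont; auto.
Qed.
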